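(* Let $a_1,a_2,a_3\in\mathbb{R}\setminus\{0\}$ and consider the connection $$\nabla=d-\Big(A_1\frac{dz}{z}+A_2\frac{dw}{w}+A_3\frac{d(z-w)}{z-w}\Big),$$ $$A_1=\begin{pmatrix}a_1&0\\ \frac{a_1+a_3-a_2}{2}&0\end{pmatrix},\quad A_2=\begin{pmatrix}0&\frac{a_2+a_3-a_1}{2}\\0&a_2\end{pmatrix},\quad A_3=\begin{pmatrix}\frac{a_2+a_3-a_1}{2}&\frac{a_1-a_2-a_3}{2}\\ \frac{a_2-a_1-a_3}{2}&\frac{a_1+a_3-a_2}{2}\end{pmatrix}$$ on the tangent bundle of $\mathbb{C}^2\setminus(\{z=0\}\cup\{w=0\}\cup\{w=z\})$ (in the frame $\partial_z,\partial_w$). Then $\nabla$ is Dunkl if and only if $|a_i|<|a_j|+|a_k|$ for all $(i,j,k)$ running over cyclic permutations of $(1,2,3)$.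
   Context: A connection of this form is Dunkl if there exists a positive definite Hermitian inner product on $\mathbb{C}^2$ with respect to which each of the residue matrices $A_1,A_2,A_3$ is self-adjoint. *)

From HB Require Import structures.
From mathcomp Require Import all_boot all_order all_algebra.
From mathcomp Require Import complex.
From mathcomp Require Import Rstruct.
From Stdlib Require Rdefinitions.
Set Implicit Arguments. Unset Strict Implicit. Unset Printing Implicit Defensive.
Import Order.TTheory GRing.Theory Num.Theory.
Local Open Scope ring_scope.

Notation CC := (Rdefinitions.R[i]).
Notation vec := 'cV[CC]_2.

Definition hermitian_inner_product (h : vec -> vec -> CC) : Prop :=
  [/\ (forall (c : CC) (u v w : vec), h (c *: u + v) w = c * h u w + h v w),
      (forall u v : vec, h v u = conjc (h u v)) &
      (forall u : vec, u != 0 -> 0 < h u u)].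

Definition self_adjoint (h : vec -> vec -> CC) (A : 'M[CC]_2) : Prop :=
  forall u v : vec, h (A *m u) v = h u (A *m v).

Definition rC (x : Rdefinitions.R) : CC := (x%:C)%C.

Definition A1 (a1 a2 a3 : Rdefinitions.R) : 'M[CC]_2 :=
  \matrix_(i < 2, j < 2)
    rC (if (val i == 0%N) && (val j == 0%N) then a1
        else if (val i == 1%N) && (val j == 0%N) then (a1 + a3 - a2) / 2
        else 0).

Definition A2 (a1 a2 a3 : Rdefinitions.R) : 'M[CC]_2 :=
  \matrix_(i < 2, j < 2)
    rC (if (val i == 0%N) && (val j == 1%N) then (a2 + a3 - a1) / 2
        else if (val i == 1%N) && (val j == 1%N) then a2
        else 0).

Definition A3 (a1 a2 a3 : Rdefinitions.R) : 'M[CC]_2 :=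
  \matrix_(i < 2, j < 2)
    rC (if (val i == 0%N) && (val j == 0%N) then (a2 + a3 - a1) / 2
        else if (val i == 0%N) && (val j == 1%N) then (a1 - a2 - a3) / 2
        else if (val i == 1%N) && (val j == 0%N) then (a2 - a1 - a3) / 2
        else (a1 + a3 - a2) / 2).

(* The connection d - (A1 dz/z + A2 dw/w + A3 d(z-w)/(z-w)) is Dunkl iff there
   is a positive definite Hermitian inner product on C^2 for which each residue
   matrix is self-adjoint. *)
Definition Dunkl (A1 A2 A3 : 'M[CC]_2) : Prop :=
  exists h, hermitian_inner_product h /\
    [/\ self_adjoint h A1, self_adjoint h A2 & self_adjoint h A3].

(* A Hermitian form h on C^2 is determined by its Gram coefficients
   p = h(e0,e0), q = h(e1,e0), r = h(e1,e1), and is positive definite iff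
   p, r > 0 and |q|^2 < p r.  The residues are real matrices; with
   c1 = (a1+a3-a2)/2 and c2 = (a2+a3-a1)/2, self-adjointness of A2 forces q to
   be real (as a2 <> 0) and A1, A2 impose a1 q + c1 r = 0 and c2 p + a2 q = 0,
   while A3 = s I - A1 - A2 adds nothing.  This linear system has a positive
   definite solution iff 0 < c1 c2 (a1 a2 - c1 c2), and sixteen times that
   quantity is Heron's product (a1+a2+a3)(-a1+a2+a3)(a1-a2+a3)(a1+a2-a3),
   which only depends on the |ai| and is positive exactly when they satisfy
   the strict triangle inequalities. *)

From HB Require Import structures.
From mathcomp Require Import all_boot all_order all_algebra.
From mathcomp Require Import complex Rstruct.
From Stdlib Require Rdefinitions.
From mathcomp Require Import ring lra.
Import Order.TTheory GRing.Theory Num.Theory.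
Local Open Scope ring_scope.

Local Notation R := Rdefinitions.R.

Definition cv2 (x y : CC) : vec := \col_i (if val i == 0%N then x else y).

Definition rmx2 (a b c d : R) : 'M[CC]_2 :=
  \matrix_(i, j) rC (if val i == 0%N then (if val j == 0%N then a else b)
                     else (if val j == 0%N then c else d)).

Lemma cv2_eta (u : vec) : u = cv2 (u ord0 ord0) (u ord_max ord0).
Proof.
apply/matrixP => -[[|[|//]] ?] j; rewrite !mxE ord1; congr (u _ _); exact: val_inj.
Qed.

Lemma cv2_eq0 (x y : CC) : (cv2 x y == 0) = (x == 0) && (y == 0).
Proof.
apply/eqP/andP => [/matrixP E | [/eqP-> /eqP->]].
  by split; apply/eqP; [have := E ord0 ord0 | have := E ord_max ord0]; rewrite !mxE.
by apply/matrixP => i j; rewrite !mxE; case: ifP.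
Qed.

Lemma cv2_decomp (x y : CC) : cv2 x y = x *: cv2 1 0 + y *: cv2 0 1.
Proof.
by apply/matrixP => -[[|[|//]] ?] j; rewrite !mxE /= ?mulr1 ?mulr0 ?addr0 ?add0r.
Qed.

Lemma mul_rmx2_cv2 (a b c d : R) (x y : CC) :
  rmx2 a b c d *m cv2 x y = cv2 (rC a * x + rC b * y) (rC c * x + rC d * y).
Proof.
by apply/matrixP => -[[|[|//]] ?] j; rewrite !mxE !big_ord_recl big_ord0 !mxE /= addr0.
Qed.

Lemma conjc_rC (x : R) : conjc (rC x) = rC x.
Proof. exact: conjc_real. Qed.

Lemma conjcD (x y : CC) : conjc (x + y) = conjc x + conjc y.
Proof. exact: rmorphD. Qed.

Lemma conjcM (x y : CC) : conjc (x * y) = conjc x * conjc y.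
Proof. exact: rmorphM. Qed.

Lemma rC_eq0 (x : R) : (rC x == 0) = (x == 0).
Proof. exact: (fmorph_eq0 (real_complex R)). Qed.

Lemma rC_gt0 (x : R) : (0 < rC x) = (0 < x).
Proof. exact: ltcR. Qed.

Lemma mul_rC_eq_rC (a b : R) (z : CC) : a != 0 -> rC a * z = rC b -> z = rC (b / a).
Proof.
move=> a_neq0 az; apply: (mulfI (_ : rC a != 0)); first by rewrite rC_eq0.
by rewrite az /rC -rmorphM mulrC divfK.
Qed.

Lemma complex_gt0_rC {z : CC} : 0 < z -> exists2 k : R, 0 < k & z = rC k.
Proof.
move=> z_gt0; have /complex_realP [k zk] := gtr0_real z_gt0.
by exists k; rewrite // -rC_gt0 /rC -zk.
Qed.

Lemma mulcJ_gt0 (z : CC) : z != 0 -> 0 < z * conjc z.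
Proof. by move=> z_neq0; rewrite lt_def mulcJ_ge0 andbT mulf_neq0 // conjc_eq0. Qed.

Definition gram_form (p q r : CC) (u v : vec) : CC :=
  u ord0 ord0 * p * conjc (v ord0 ord0) + u ord_max ord0 * q * conjc (v ord0 ord0)
  + u ord0 ord0 * conjc q * conjc (v ord_max ord0)
  + u ord_max ord0 * r * conjc (v ord_max ord0).

Lemma gram_form_cv2 (p q r x y x' y' : CC) :
  gram_form p q r (cv2 x y) (cv2 x' y') =
  x * p * conjc x' + y * q * conjc x' + x * conjc q * conjc y' + y * r * conjc y'.
Proof. by rewrite /gram_form !mxE. Qed.

Section HermitianForm.

Context {h : vec -> vec -> CC} (hh : hermitian_inner_product h).

Lemma herm0l (v : vec) : h 0 v = 0.
Proof.
have [hlin _ _] := hh; have := hlin 1 0 0 v.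
rewrite scale1r addr0 mul1r => E.
by apply: (addrI (h 0 v)); rewrite addr0 -E.
Qed.

Lemma hermZl (c : CC) (u v : vec) : h (c *: u) v = c * h u v.
Proof. by have [hlin _ _] := hh; rewrite -[c *: u]addr0 hlin herm0l addr0. Qed.

Lemma herm_cv2l (x y : CC) (v : vec) :
  h (cv2 x y) v = x * h (cv2 1 0) v + y * h (cv2 0 1) v.
Proof. by have [hlin _ _] := hh; rewrite cv2_decomp hlin hermZl. Qed.

Lemma herm_cv2r (u : vec) (x y : CC) :
  h u (cv2 x y) = conjc x * h u (cv2 1 0) + conjc y * h u (cv2 0 1).
Proof.
have [_ hsym _] := hh.
rewrite (hsym (cv2 1 0)) (hsym (cv2 0 1)) hsym herm_cv2l.
by rewrite conjcD !conjcM.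
Qed.

Lemma herm_gram (u v : vec) :
  h u v = gram_form (h (cv2 1 0) (cv2 1 0)) (h (cv2 0 1) (cv2 1 0))
                    (h (cv2 0 1) (cv2 0 1)) u v.
Proof.
have [_ hsym _] := hh.
rewrite (cv2_eta u) (cv2_eta v) gram_form_cv2 herm_cv2l.
rewrite (herm_cv2r (cv2 1 0)) (herm_cv2r (cv2 0 1)) [h (cv2 1 0) (cv2 0 1)]hsym.
ring.
Qed.

Lemma self_adjoint_rmx2_coef {a b c d : R} : self_adjoint h (rmx2 a b c d) ->
  rC b * h (cv2 1 0) (cv2 1 0) + rC d * h (cv2 0 1) (cv2 1 0) =
  rC a * h (cv2 0 1) (cv2 1 0) + rC c * h (cv2 0 1) (cv2 0 1).
Proof.
move=> /(_ (cv2 0 1) (cv2 1 0)).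
rewrite !mul_rmx2_cv2 herm_cv2l (herm_cv2r (cv2 0 1) (_ + _)) !conjcD !conjcM.
by rewrite !conjc_rC => E; apply: etrans (etrans _ E) _; ring.
Qed.

End HermitianForm.

Definition posdef_sym2 {F : realDomainType} (p q r : F) : Prop :=
  [/\ 0 < p, 0 < r & q ^+ 2 < p * r].

Section RealGramForm.

Variables p q r : R.

Local Notation g := (gram_form (rC p) (rC q) (rC r)).

Lemma gram_form_rC (x y : R) :
  g (cv2 (rC x) (rC y)) (cv2 (rC x) (rC y))
  = rC (p * x ^+ 2 + 2 * q * x * y + r * y ^+ 2).
Proof. by rewrite gram_form_cv2 !conjc_rC; ring. Qed.

Lemma gram_form_posdef : (forall u, u != 0 -> 0 < g u u) -> posdef_sym2 p q r.
Proof.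
move=> g_pos.
have quad_pos (x y : R) : ~~ ((x == 0) && (y == 0)) ->
    0 < p * x ^+ 2 + 2 * q * x * y + r * y ^+ 2.
  by move=> xy; rewrite -rC_gt0 -gram_form_rC g_pos // cv2_eq0 !rC_eq0.
have p_gt0 : 0 < p by have := quad_pos 1 0; rewrite oner_eq0 /=; lra.
split=> //; first by have := quad_pos 0 1; rewrite oner_eq0 andbF /=; lra.
have := quad_pos q (- p); rewrite oppr_eq0 (gt_eqF p_gt0) andbF => /(_ isT).
have -> : p * q ^+ 2 + 2 * q * q * - p + r * (- p) ^+ 2 = p * (p * r - q ^+ 2) by ring.
by rewrite pmulr_rgt0 // subr_gt0.
Qed.

Lemma gram_form_hermitian : posdef_sym2 p q r -> hermitian_inner_product g.
Proof.
case=> p_gt0 r_gt0 qpr; split.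
- by move=> k u v w; rewrite /gram_form !mxE; ring.
- by move=> u v; rewrite /gram_form !conjcD !conjcM !conjcK !conjc_rC; ring.
move=> u; rewrite (cv2_eta u) cv2_eq0 negb_and gram_form_cv2.
move: (u ord0 ord0) (u ord_max ord0) => x y xy0.
have pC_gt0 : 0 < rC p by rewrite rC_gt0.
rewrite -(pmulr_rgt0 _ pC_gt0) conjc_rC.
have -> : rC p * (x * rC p * conjc x + y * rC q * conjc x + x * rC q * conjc y
                  + y * rC r * conjc y)
    = (rC p * x + rC q * y) * conjc (rC p * x + rC q * y)
      + rC (p * r - q ^+ 2) * (y * conjc y).
  by rewrite conjcD !conjcM !conjc_rC /rC; ring.
have [y0 | y_neq0] := eqVneq y 0.
  move: xy0; rewrite y0 eqxx orbF => x_neq0.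
  by rewrite conjc0 !(mulr0, addr0) mulcJ_gt0 // mulf_neq0 // gt_eqF.
apply: ltr_wpDl; first exact: mulcJ_ge0.
by rewrite mulr_gt0 ?mulcJ_gt0 // rC_gt0 subr_gt0.
Qed.

Lemma gram_form_self_adjoint (a b c d : R) :
  p * b + q * d = q * a + r * c -> self_adjoint g (rmx2 a b c d).
Proof.
move=> coef u v; rewrite (cv2_eta u) (cv2_eta v) !mul_rmx2_cv2 !gram_form_cv2.
rewrite !conjcD !conjcM !conjc_rC; apply: subr0_eq.
transitivity (rC (p * b + q * d - (q * a + r * c)) *
  (u ord_max ord0 * conjc (v ord0 ord0) - u ord0 ord0 * conjc (v ord_max ord0))).
  by rewrite /rC; ring.
by rewrite coef subrr mul0r.
Qed.

End RealGramForm.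

Section RealAlgebra.

Context {F : realFieldType}.

Lemma posdef_constraints_iff (a1 a2 c1 c2 : F) : a1 * a2 != 0 -> c1 + c2 != 0 ->
  (exists p q r, [/\ posdef_sym2 p q r, a1 * q + c1 * r = 0 & c2 * p + a2 * q = 0])
  <-> 0 < c1 * c2 * (a1 * a2 - c1 * c2).
Proof.
move=> a12_neq0 c12_neq0; split.
  case=> p [q [r [[p_gt0 r_gt0 qpr] E1 E2]]].
  have q_neq0 : q != 0.
    apply: contraNneq c12_neq0 => q0; move: E1 E2; rewrite q0 !mulr0 add0r addr0.
    move=> /eqP; rewrite mulf_eq0 (gt_eqF r_gt0) orbF => /eqP->.
    by move=> /eqP; rewrite mulf_eq0 (gt_eqF p_gt0) orbF => /eqP->; rewrite addr0.
  have key : a1 * a2 * q ^+ 2 = c1 * c2 * (p * r).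
    have -> : c1 * c2 * (p * r) = (c1 * r) * (c2 * p) by ring.
    by rewrite -(addr0_eq E1) -(addr0_eq (etrans (addrC _ _) E2)); ring.
  have c12 : c1 * c2 != 0.
    apply: contraNneq (mulf_neq0 a12_neq0 (expf_neq0 2 q_neq0)) => c0.
    by rewrite key c0 mul0r.
  have -> : c1 * c2 * (a1 * a2 - c1 * c2)
      = (c1 * c2) ^+ 2 * (p * r - q ^+ 2) / q ^+ 2.
    have -> : (c1 * c2) ^+ 2 * (p * r - q ^+ 2)
        = c1 * c2 * (c1 * c2 * (p * r)) - (c1 * c2) ^+ 2 * q ^+ 2 by ring.
    by rewrite -key; field.
  apply: divr_gt0; last by rewrite exprn_even_gt0.
  by apply: mulr_gt0; rewrite ?exprn_even_gt0 // subr_gt0.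
move=> t_pos.
have c12 : c1 * c2 != 0 by apply: contraTneq t_pos => ->; rewrite mul0r ltxx.
have a2c1 : a2 * c1 != 0.
  rewrite mulf_neq0 //; first by apply: contraNneq a12_neq0 => ->; rewrite mulr0.
  by apply: contraNneq c12 => ->; rewrite mul0r.
exists ((a2 * c1) ^+ 2), (- (a2 * c1 ^+ 2 * c2)), (a1 * a2 * c1 * c2).
split; [split | ring | ring].
- by rewrite exprn_even_gt0.
- by nra.
rewrite -subr_gt0.
have -> : (a2 * c1) ^+ 2 * (a1 * a2 * c1 * c2) - (- (a2 * c1 ^+ 2 * c2)) ^+ 2
    = (a2 * c1) ^+ 2 * (c1 * c2 * (a1 * a2 - c1 * c2)) by ring.
by rewrite mulr_gt0 // exprn_even_gt0.
Qed.

End RealAlgebra.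

Section Heron.

Context {F : realDomainType}.

Definition heron (x y z : F) : F :=
  (x + y + z) * (- x + y + z) * (x - y + z) * (x + y - z).

Lemma heron_sqr (x y z : F) : heron x y z =
  2 * (x ^+ 2 * y ^+ 2 + y ^+ 2 * z ^+ 2 + z ^+ 2 * x ^+ 2)
  - (x ^+ 2 ^+ 2 + y ^+ 2 ^+ 2 + z ^+ 2 ^+ 2).
Proof. by rewrite /heron; ring. Qed.

Lemma heron_norm (x y z : F) : heron `|x| `|y| `|z| = heron x y z.
Proof. by rewrite !heron_sqr !real_normK ?num_real. Qed.

Lemma heron_le0 (x y z : F) : 0 <= y -> 0 <= z -> y + z <= x -> heron x y z <= 0.
Proof.
move=> y_ge0 z_ge0 yz_le_x.
have -> : heron x y z = (x + y + z) * (x - y + z) * (x + y - z) * (- x + y + z).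
  by rewrite /heron; ring.
by rewrite mulr_ge0_le0 ?mulr_ge0 //; lra.
Qed.

Lemma heron_gt0 (x y z : F) : 0 <= x -> 0 <= y -> 0 <= z ->
  0 < heron x y z <-> [/\ x < y + z, y < z + x & z < x + y].
Proof.
move=> x_ge0 y_ge0 z_ge0; split => [H | [lt_x lt_y lt_z]].
  have heron_cycle : heron x y z = heron y z x by rewrite /heron; ring.
  have heron_cycle2 : heron x y z = heron z x y by rewrite /heron; ring.
  split; rewrite ltNge; apply: contraTN H => le; rewrite -leNgt.
  - exact: heron_le0.
  - by rewrite heron_cycle heron_le0.
  - by rewrite heron_cycle2 heron_le0.
by rewrite /heron !mulr_gt0 //; lra.
Qed.

End Heron.

Lemma Dunkl_rmx2_iff (a1 a2 c1 c2 : R) : a2 != 0 -> c1 - c2 = a1 - a2 ->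
  Dunkl (rmx2 a1 0 c1 0) (rmx2 0 c2 0 a2) (rmx2 c2 (- c2) (- c1) c1) <->
  exists p q r, [/\ posdef_sym2 p q r, a1 * q + c1 * r = 0 & c2 * p + a2 * q = 0].
Proof.
move=> a2_neq0 c12; split.
  case=> h [hh [sa1 sa2 _]]; have [_ _ h_pos] := hh.
  have e0_neq0 : cv2 1 0 != 0 by rewrite cv2_eq0 oner_eq0.
  have e1_neq0 : cv2 0 1 != 0 by rewrite cv2_eq0 oner_eq0 andbF.
  have [p _ hp] := complex_gt0_rC (h_pos _ e0_neq0).
  have [r _ hr] := complex_gt0_rC (h_pos _ e1_neq0).
  have := self_adjoint_rmx2_coef hh sa2; rewrite hp hr !mul0r addr0 => E2.
  have hq : h (cv2 0 1) (cv2 1 0) = rC (- (c2 * p) / a2).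
    apply: mul_rC_eq_rC => //.
    by rewrite -[LHS](addKr (rC c2 * rC p)) E2 addr0 /rC rmorphN rmorphM.
  have := self_adjoint_rmx2_coef hh sa1; rewrite hq hr !mul0r addr0 => E1.
  set q := - (c2 * p) / a2 in hq E1 *; exists p, q, r; split.
  - apply: gram_form_posdef => u u_neq0.
    by rewrite -hq -hp -hr -herm_gram // h_pos.
  - by apply: complexI; apply: etrans _ (esym E1); rewrite /rC; ring.
  - by rewrite /q; field.
case=> p [q [r [pd E1 E2]]]; exists (gram_form (rC p) (rC q) (rC r)).
split; first exact: gram_form_hermitian.
by split; apply: gram_form_self_adjoint; nra.
Qed.

Lemma A1E (a1 a2 a3 : R) : A1 a1 a2 a3 = rmx2 a1 0 ((a1 + a3 - a2) / 2) 0.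
Proof. by apply/matrixP => -[[|[|//]] ?] [[|[|//]] ?]; rewrite !mxE. Qed.

Lemma A2E (a1 a2 a3 : R) : A2 a1 a2 a3 = rmx2 0 ((a2 + a3 - a1) / 2) 0 a2.
Proof. by apply/matrixP => -[[|[|//]] ?] [[|[|//]] ?]; rewrite !mxE. Qed.

Lemma A3E (a1 a2 a3 : R) : A3 a1 a2 a3 =
  rmx2 ((a2 + a3 - a1) / 2) (- ((a2 + a3 - a1) / 2))
       (- ((a1 + a3 - a2) / 2)) ((a1 + a3 - a2) / 2).
Proof.
by apply/matrixP => -[[|[|//]] ?] [[|[|//]] ?]; rewrite !mxE //=; congr rC; lra.
Qed.

Theorem lemma27 (a1 a2 a3 : Rdefinitions.R) :
  a1 != 0 -> a2 != 0 -> a3 != 0 ->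
  (Dunkl (A1 a1 a2 a3) (A2 a1 a2 a3) (A3 a1 a2 a3) <->
   [/\ `|a1| < `|a2| + `|a3|, `|a2| < `|a3| + `|a1| & `|a3| < `|a1| + `|a2|]).
Proof.
move=> a1_neq0 a2_neq0 a3_neq0.
rewrite A1E A2E A3E -heron_gt0 ?normr_ge0 // heron_norm.
set c1 := (a1 + a3 - a2) / 2; set c2 := (a2 + a3 - a1) / 2.
have c1Bc2 : c1 - c2 = a1 - a2 by rewrite /c1 /c2; lra.
have c1Dc2 : c1 + c2 = a3 by rewrite /c1 /c2; lra.
rewrite Dunkl_rmx2_iff // posdef_constraints_iff ?mulf_neq0 ?c1Dc2 //.
have -> : heron a1 a2 a3 = 16 * (c1 * c2 * (a1 * a2 - c1 * c2)).
  by rewrite /heron /c1 /c2; field.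
by rewrite (pmulr_rgt0 _ (_ : 0 < 16)).
Qed.
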